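(* Let $n\geq 3$ and let $\rho: B_n \rightarrow GL_n(\mathbb{C})$ be a non-trivial homogeneous $2$-local representation of $B_n$. Let $\rho': SM_n \rightarrow M_n(\mathbb{C})$ be a non-trivial homogeneous $2$-local extension of $\rho$ to $SM_n$. Then $\rho'$ is equivalent to one of the following three representations, where for each $1\le i\le n-1$ we write $D_i(X)$ for the block diagonal matrix $\mathrm{diag}(I_{i-1},X,I_{n-i-1})$ with $X\in M_2(\mathbb{C})$: (1) $\rho'_1$ with $\rho'_1(\sigma_i)=\rho_1(\sigma_i)$ and $\rho'_1(\tau_i)=D_i\begin{pmatrix} 1-(1-a)(1-t) & \frac{1-a}{c}(1-t)\\ c(1-t) & t\end{pmatrix}$, where $a,c,t\in\mathbb{C}$, $a\neq 0$, $c\neq 0$; (2) $\rho'_2$ with $\rho'_2(\sigma_i)=\rho_2(\sigma_i)$ and $\rho'_2(\tau_i)=D_i\begin{pmatrix} x & \frac{1-d}{c}(1-x)\\ c(1-x) & 1-(1-d)(1-x)\end{pmatrix}$, where $c,d,x\in\mathbb{C}$, $c\neq 0$, $d\neq 0$; (3) $\rho'_3$ with $\rho'_3(\sigma_i)=\rho_3(\sigma_i)$ and $\rho'_3(\tau_i)=D_i\begin{pmatrix} x & y\\ \frac{cy}{b} & x\end{pmatrix}$, where $b,c,x,y\in\mathbb{C}$, $b\neq 0$, $c\neq 0$. Here $\rho_1(\sigma_i)=D_i\begin{pmatrix} a&\frac{1-a}{c}\\ c&0\end{pmatrix}$ with $c\neq 0$, $a\neq 1$; $\rho_2(\sigma_i)=D_i\begin{pmatrix}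 0&\frac{1-d}{c}\\ c&d\end{pmatrix}$ with $c\neq0$, $d\neq 1$; and $\rho_3(\sigma_i)=D_i\begin{pmatrix} 0&b\\ c&0\end{pmatrix}$ with $bc\neq 0$ (for all $1\le i\le n-1$). Moreover, if $\rho'(\tau_i)$ is invertible for all $1\leq i\leq n-1$, then $\rho'$ is a representation of the singular braid group $SB_n$.
   Context: The braid group $B_n$ has generators $\sigma_1,\dots,\sigma_{n-1}$ with relations $\sigma_i\sigma_{i+1}\sigma_i=\sigma_{i+1}\sigma_i\sigma_{i+1}$ ($1\le i\le n-2$) and $\sigma_i\sigma_j=\sigma_j\sigma_i$ ($|i-j|\ge2$). The singular braid monoid $SM_n$ is the monoid generated by $\sigma_1^{\pm1},\dots,\sigma_{n-1}^{\pm1},\tau_1,\dots,\tau_{n-1}$ subject to $\sigma_i\sigma_i^{-1}=\sigma_i^{-1}\sigma_i=1$, the braid relations above, and the relations $\tau_i\tau_j=\tau_j\tau_i$ and $\tau_i\sigma_j=\sigma_j\tau_i$ for $|i-j|\ge 2$, $\tau_i\sigma_i=\sigma_i\tau_i$ for $1\le i\le n-1$, and $\sigma_i\sigma_{i+1}\tau_i=\tau_{i+1}\sigma_i\sigma_{i+1}$, $\sigma_{i+1}\sigma_i\tau_{i+1}=\tau_i\sigma_{i+1}\sigma_i$ for $1\le i\le n-2$. The singular braid group $SB_n$ is the group with generators $\sigma_i,\tau_i$ ($1\le i\le n-1$) and the same relations (into which $SM_n$ embeds). A representation of $SM_n$ is a monoid homomorphism into a matrix monoid $M_m(\mathbb{C})$.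 A representation $\rho:B_n\to GL_m(\mathbb{C})$ is homogeneous $k$-local, with $k=m-n+2$, if there is $M\in M_k(\mathbb{C})$ such that $\rho(\sigma_i)=\mathrm{diag}(I_{i-1},M,I_{n-i-1})$ for all $1\le i\le n-1$. A homogeneous $k$-local extension of such $\rho$ to $SM_n$ is a representation $\rho':SM_n\to M_m(\mathbb{C})$ with $\rho'(\sigma_i)=\rho(\sigma_i)$ and $\rho'(\tau_i)=\mathrm{diag}(I_{i-1},N,I_{n-i-1})$ for all $i$, for a single matrix $N\in M_k(\mathbb{C})$. ''Non-trivial'' means not sending every generator $\sigma_i$ to the identity. Two representations are equivalent if they are conjugate by a fixed invertible matrix. *)

From mathcomp Require Import all_boot all_algebra.
From mathcomp Require Import reals.
From mathcomp.real_closed Require Export complex.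
Set Implicit Arguments. Unset Strict Implicit. Unset Printing Implicit Defensive.
Import GRing.Theory.
Local Open Scope ring_scope.

Section Defs.
Variable F : comUnitRingType.

(* blockD n i X = diag(I_{i-1}, X, I_{n-i-1}) for 1 <= i <= n-1, X a 2x2 matrix:
   X occupies rows/columns i-1 and i (0-based). *)
Definition blockD (n i : nat) (X : 'M[F]_2) : 'M[F]_n :=
  \matrix_(r < n, s < n)
    if [&& i.-1 <= r, r <= i, i.-1 <= s & s <= i]%N
    then X (inord (r - i.-1)) (inord (s - i.-1))
    else (r == s)%:R.

Definition braid_rels (n : nat) (S : nat -> 'M[F]_n) : Prop :=
  (forall i, (1 <= i)%N -> (i <= n - 2)%N ->
     S i *m S i.+1 *m S i = S i.+1 *m S i *m S i.+1) /\
  (forall i j, (1 <= i <= n - 1)%N -> (1 <= j <= n - 1)%N ->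
     ((i.+1 < j) || (j.+1 < i))%N -> S i *m S j = S j *m S i).

(* A representation of B_n into GL_n: invertible images satisfying the braid
   relations (B_n is presented by these generators and relations). *)
Definition braid_rep (n : nat) (S : nat -> 'M[F]_n) : Prop :=
  (forall i, (1 <= i <= n - 1)%N -> S i \in unitmx) /\ braid_rels S.

Definition singular_rels (n : nat) (S T : nat -> 'M[F]_n) : Prop :=
  (forall i j, (1 <= i <= n - 1)%N -> (1 <= j <= n - 1)%N ->
     ((i.+1 < j) || (j.+1 < i))%N ->
       T i *m T j = T j *m T i /\ T i *m S j = S j *m T i) /\
  (forall i, (1 <= i <= n - 1)%N -> T i *m S i = S i *m T i) /\
  (forall i, (1 <= i)%N -> (i <= n - 2)%N ->
     S i *m S i.+1 *m T i = T i.+1 *m S i *m S i.+1 /\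
     S i.+1 *m S i *m T i.+1 = T i *m S i.+1 *m S i).

(* A monoid representation of SM_n into M_n: sigma_i^{+-1} must go to mutually
   inverse matrices, so images of sigma_i are invertible; tau_i images arbitrary. *)
Definition SM_rep (n : nat) (S T : nat -> 'M[F]_n) : Prop :=
  braid_rep S /\ singular_rels S T.

Definition SB_rep (n : nat) (S T : nat -> 'M[F]_n) : Prop :=
  (forall i, (1 <= i <= n - 1)%N -> S i \in unitmx /\ T i \in unitmx) /\
  braid_rels S /\ singular_rels S T.

Definition nontrivial (n : nat) (S : nat -> 'M[F]_n) : Prop :=
  exists i, (1 <= i <= n - 1)%N /\ S i != 1%:M.

Definition equiv_SM (n : nat) (S T S' T' : nat -> 'M[F]_n) : Prop :=
  exists P : 'M[F]_n, P \in unitmx /\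
    forall i, (1 <= i <= n - 1)%N ->
      S i = P *m S' i *m invmx P /\ T i = P *m T' i *m invmx P.
End Defs.

Section Families.
Variable F : fieldType.
Definition mx22 (p q r' s' : F) : 'M[F]_2 :=
  \matrix_(r < 2, s < 2)
    if r == 0 :> nat then (if s == 0 :> nat then p else q)
    else (if s == 0 :> nat then r' else s').
Definition rho1 (a c : F) : 'M[F]_2 :=
  mx22 (a) ((1 - a) / c) (c) (0).
Definition tau1 (a c t : F) : 'M[F]_2 :=
  mx22 (1 - (1 - a) * (1 - t)) ((1 - a) / c * (1 - t)) (c * (1 - t)) (t).
Definition rho2 (c d : F) : 'M[F]_2 :=
  mx22 (0) ((1 - d) / c) (c) (d).
Definition tau2 (c d x : F) : 'M[F]_2 :=
  mx22 (x) ((1 - d) / c * (1 - x)) (c * (1 - x)) (1 - (1 - d) * (1 - x)).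
Definition rho3 (b c : F) : 'M[F]_2 :=
  mx22 (0) (b) (c) (0).
Definition tau3 (b c x y : F) : 'M[F]_2 :=
  mx22 (x) (y) (c * y / b) (x).
End Families.

(* Homogeneity lets everything be read off in dimension 3: for i = 1, 2 the
   matrix blockD n i X is diag(blockD 3 i X, I), so the braid relation, the
   commutation of tau_1 with sigma_1 and the relation
   sigma_1 sigma_2 tau_1 = tau_2 sigma_1 sigma_2 become polynomial equations in
   the entries of M = [[a, b], [c, d]] and N = [[x, y], [z, w]].  The braid
   relation gives a (a + bc - 1) = abd = acd = d (bc + d - 1) = 0.  If a and d
   are both nonzero, then b = c = 0 and M = 1, which non-triviality excludes.
   Otherwise ad = 0, so bc = -det M is nonzero, and the three cases
   a <> 0 = d, a = 0 <> d and a = d = 0 solve the remaining equations into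
   exactly the three families; the equivalence is then conjugation by the
   identity.  The statement about SB_n only repackages the hypotheses. *)

From mathcomp Require Import all_boot all_algebra.
From mathcomp Require Import reals.
From mathcomp.real_closed Require Import complex.
From mathcomp Require Import zify ring.
Set Implicit Arguments. Unset Strict Implicit. Unset Printing Implicit Defensive.
Import GRing.Theory.
Local Open Scope ring_scope.

Section BlockDiagonal.
Variable F : comUnitRingType.

Lemma blockD_ulblock k m i (X : 'M[F]_2) : (i < k)%N ->
  blockD (k + m) i X = block_mx (blockD k i X) 0 0 1%:M.
Proof.
move=> lt_ik; apply/matrixP => r s.
case: (split_ordP r) => r' ->; case: (split_ordP s) => s' ->.
- by rewrite block_mxEul !mxE.
- rewrite block_mxEur !mxE /= eq_lrshift ifF //.
  by apply/negbTE; rewrite !negb_and; lia.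
- rewrite block_mxEdl !mxE /= eq_rlshift ifF //.
  by apply/negbTE; rewrite !negb_and; lia.
- rewrite block_mxEdr !mxE /= eq_rshift ifF //.
  by apply/negbTE; rewrite !negb_and; lia.
Qed.

Lemma blockD_2_1 (X : 'M[F]_2) : blockD 2 1 X = X.
Proof.
by apply/matrixP => r s; rewrite mxE /= !subn0 !leq_ord !inord_val.
Qed.

Lemma det_blockD_1 k (X : 'M[F]_2) : \det (blockD (2 + k) 1 X) = \det X.
Proof. by rewrite blockD_ulblock // blockD_2_1 det_lblock det1 mulr1. Qed.

Lemma blockD_1 n i : blockD n i (1%:M : 'M[F]_2) = 1%:M.
Proof.
apply/matrixP => r s; rewrite !mxE; case: ifP => // /and4P [] *.
congr (_%:R); rewrite -[r == s](inj_eq val_inj) -(inj_eq val_inj) /= !inordK; lia.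
Qed.

Lemma mul_block_diag1 k m (A B : 'M[F]_k) :
  block_mx A 0 0 (1%:M : 'M_m) *m block_mx B 0 0 1%:M = block_mx (A *m B) 0 0 1%:M.
Proof. by rewrite mulmx_block !mulmx0 !mul0mx !addr0 !add0r mulmx1. Qed.

Lemma equiv_SM_refl n (S T : nat -> 'M[F]_n) : equiv_SM S T S T.
Proof.
exists 1%:M; split=> [|i _]; first exact: unitmx1.
by split; rewrite invmx1 mul1mx !mulmx1.
Qed.

End BlockDiagonal.

Section ThreeByThree.
Variable R : comPzRingType.

Definition mx33 (a b c d e f g h k : R) : 'M[R]_3 :=
  \matrix_(r < 3, s < 3)
    nth 0 (nth [::] [:: [:: a; b; c]; [:: d; e; f]; [:: g; h; k]] r) s.

Lemma mx33_mul a b c d e f g h k a' b' c' d' e' f' g' h' k' :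
  mx33 a b c d e f g h k *m mx33 a' b' c' d' e' f' g' h' k' =
  mx33 (a*a'+b*d'+c*g') (a*b'+b*e'+c*h') (a*c'+b*f'+c*k')
       (d*a'+e*d'+f*g') (d*b'+e*e'+f*h') (d*c'+e*f'+f*k')
       (g*a'+h*d'+k*g') (g*b'+h*e'+k*h') (g*c'+h*f'+k*k').
Proof.
apply/matrixP => r s; rewrite !mxE !big_ord_recr big_ord0 /= !mxE /=.
by case: r => [[|[|[|r]]] hr] //; case: s => [[|[|[|s]]] hs] //=; ring.
Qed.

Lemma mx33_inj a b c d e f g h k a' b' c' d' e' f' g' h' k' :
  mx33 a b c d e f g h k = mx33 a' b' c' d' e' f' g' h' k' ->
  [/\ [/\ a = a', b = b' & c = c'], [/\ d = d', e = e' & f = f']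
    & [/\ g = g', h = h' & k = k']].
Proof.
move/matrixP=> eqA.
move: (eqA 0 0) (eqA 0 1) (eqA 0 2) (eqA 1 0) (eqA 1 1) (eqA 1 2)
  (eqA 2 0) (eqA 2 1) (eqA 2 2); rewrite !mxE /=.
by do 9!move=> ->; do !split.
Qed.

End ThreeByThree.

Section TwoByTwo.
Variable F : fieldType.

Lemma mx22_eta (X : 'M[F]_2) : exists p q r s, X = mx22 p q r s.
Proof.
exists (X 0 0), (X 0 1), (X 1 0), (X 1 1); apply/matrixP => r s; rewrite !mxE.
by case: r => [[|[|r]] hr] //; case: s => [[|[|s]] hs] //=; congr (X _ _); apply/val_inj.
Qed.

Lemma mx22_1 : mx22 1 0 0 1 = 1%:M :> 'M[F]_2.
Proof. by apply/matrixP => -[[|[|r]] hr] -[[|[|s]] hs]; rewrite !mxE. Qed.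

Lemma det_mx22 (p q r s : F) : \det (mx22 p q r s) = p * s - q * r.
Proof.
rewrite (expand_det_row _ 0) !big_ord_recr big_ord0 /= /cofactor !det_mx11.
by rewrite !mxE /= !add0n expr0 expr1; ring.
Qed.

Lemma blockD3_1_mx22 (p q r s : F) :
  blockD 3 1 (mx22 p q r s) = mx33 p q 0 r s 0 0 0 1.
Proof.
apply/matrixP => -[[|[|[|i]]] hi] // -[[|[|[|j]]] hj] //.
all: by rewrite !mxE /= ?inordK.
Qed.

Lemma blockD3_2_mx22 (p q r s : F) :
  blockD 3 2 (mx22 p q r s) = mx33 1 0 0 0 p q 0 r s.
Proof.
apply/matrixP => -[[|[|[|i]]] hi] // -[[|[|[|j]]] hj] //.
all: by rewrite !mxE /= ?inordK.
Qed.

End TwoByTwo.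

Section LocalEquations.
Variable F : fieldType.

Lemma eq0_of_eq_sub (u v w : F) : u = v -> w = u - v -> w = 0.
Proof. by move=> -> ->; rewrite subrr. Qed.

Lemma braid3_mx22 (a b c d : F) :
  blockD 3 1 (mx22 a b c d) *m blockD 3 2 (mx22 a b c d) *m blockD 3 1 (mx22 a b c d) =
    blockD 3 2 (mx22 a b c d) *m blockD 3 1 (mx22 a b c d) *m blockD 3 2 (mx22 a b c d) ->
  [/\ a * (a + b * c - 1) = 0, a * b * d = 0, a * c * d = 0
    & d * (b * c + d - 1) = 0].
Proof.
rewrite !blockD3_1_mx22 !blockD3_2_mx22 !mx33_mul.
move=> /mx33_inj[[e00 e01 _] [e10 _ _] [_ _ e22]].
by split; [apply: (eq0_of_eq_sub e00) | apply: (eq0_of_eq_sub e01)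
  | apply: (eq0_of_eq_sub e10) | apply: (eq0_of_eq_sub (esym e22))]; ring.
Qed.

Lemma commute3_mx22 (a b c d x y z w : F) :
  blockD 3 1 (mx22 x y z w) *m blockD 3 1 (mx22 a b c d) =
    blockD 3 1 (mx22 a b c d) *m blockD 3 1 (mx22 x y z w) ->
  y * c - b * z = 0 /\ x * b + y * d - (a * y + b * w) = 0.
Proof.
rewrite !blockD3_1_mx22 !mx33_mul => /mx33_inj[[e00 e01 _] _ _].
by split; [apply: (eq0_of_eq_sub e00) | apply: (eq0_of_eq_sub e01)]; ring.
Qed.

Lemma mixed3_mx22 (a b c d x y z w : F) :
  blockD 3 1 (mx22 a b c d) *m blockD 3 2 (mx22 a b c d) *m blockD 3 1 (mx22 x y z w) =
    blockD 3 2 (mx22 x y z w) *m blockD 3 1 (mx22 a b c d) *m blockD 3 2 (mx22 a b c d) ->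
  [/\ a * (x + b * z - 1) = 0, a * (y + b * w - b) = 0,
      d * (b - x * b - y) = 0 & d * (1 - z * b - w) = 0].
Proof.
rewrite !blockD3_1_mx22 !blockD3_2_mx22 !mx33_mul.
move=> /mx33_inj[[e00 e01 _] [_ _ e12] [_ _ e22]].
by split; [apply: (eq0_of_eq_sub e00) | apply: (eq0_of_eq_sub e01)
  | apply: (eq0_of_eq_sub e12) | apply: (eq0_of_eq_sub e22)]; ring.
Qed.

End LocalEquations.

Section LocalSolutions.
Variables (F : fieldType) (a b c d x y z w : F).
Hypotheses (braid_a : a * (a + b * c - 1) = 0) (braid_abd : a * b * d = 0)
  (braid_acd : a * c * d = 0) (braid_d : d * (b * c + d - 1) = 0).
Hypotheses (commute_c : y * c - b * z = 0)
  (commute_b : x * b + y * d - (a * y + b * w) = 0).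
Hypotheses (mixed_x : a * (x + b * z - 1) = 0) (mixed_y : a * (y + b * w - b) = 0)
  (mixed_b : d * (b - x * b - y) = 0) (mixed_w : d * (1 - z * b - w) = 0).

Lemma local_solution_trivial : a != 0 -> d != 0 -> mx22 a b c d = 1%:M.
Proof.
move=> a_nz d_nz.
have b0 : b = 0.
  by apply/eqP; move/eqP: braid_abd; rewrite !mulf_eq0 (negbTE a_nz) (negbTE d_nz) orbF.
have c0 : c = 0.
  by apply/eqP; move/eqP: braid_acd; rewrite !mulf_eq0 (negbTE a_nz) (negbTE d_nz) orbF.
have e_a : a + b * c - 1 = 0 by apply: (mulfI a_nz); rewrite mulr0.
have e_d : b * c + d - 1 = 0 by apply: (mulfI d_nz); rewrite mulr0.
have a1 : a = 1 by apply/subr0_eq/(eq0_of_eq_sub e_a); rewrite b0; ring.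
have d1 : d = 1 by apply/subr0_eq/(eq0_of_eq_sub e_d); rewrite b0; ring.
by rewrite a1 b0 c0 d1 mx22_1.
Qed.

Lemma local_solution_family1 : a != 0 -> d = 0 -> b * c != 0 ->
  [/\ a != 1, mx22 a b c d = rho1 a c & mx22 x y z w = tau1 a c w].
Proof.
move=> a_nz d0 bc_nz; have [b_nz c_nz] : b != 0 /\ c != 0 by apply/norP; rewrite -mulf_eq0.
have e_a : a + b * c - 1 = 0 by apply: (mulfI a_nz); rewrite mulr0.
have e_x : x + b * z - 1 = 0 by apply: (mulfI a_nz); rewrite mulr0.
have e_y : y + b * w - b = 0 by apply: (mulfI a_nz); rewrite mulr0.
have bc : b * c = 1 - a by apply/subr0_eq/(eq0_of_eq_sub e_a); ring.
have bE : b = (1 - a) / c by rewrite -bc mulfK.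
have yE : y = b * (1 - w) by apply/subr0_eq/(eq0_of_eq_sub e_y); ring.
have zE : z = c * (1 - w).
  apply/esym/subr0_eq/(mulfI b_nz); rewrite mulr0.
  by apply: (eq0_of_eq_sub commute_c); rewrite yE; ring.
have xE : x = 1 - (1 - a) * (1 - w).
  by apply/subr0_eq/(eq0_of_eq_sub e_x); rewrite zE -bc; ring.
split; last by rewrite xE yE zE bE.
  by apply: contraNneq bc_nz => a1; rewrite bc a1 subrr.
by rewrite d0 bE.
Qed.

Lemma local_solution_family2 : a = 0 -> d != 0 -> b * c != 0 ->
  [/\ d != 1, mx22 a b c d = rho2 c d & mx22 x y z w = tau2 c d x].
Proof.
move=> a0 d_nz bc_nz; have [b_nz c_nz] : b != 0 /\ c != 0 by apply/norP; rewrite -mulf_eq0.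
have e_d : b * c + d - 1 = 0 by apply: (mulfI d_nz); rewrite mulr0.
have e_b : b - x * b - y = 0 by apply: (mulfI d_nz); rewrite mulr0.
have e_w : 1 - z * b - w = 0 by apply: (mulfI d_nz); rewrite mulr0.
have bc : b * c = 1 - d by apply/subr0_eq/(eq0_of_eq_sub e_d); ring.
have bE : b = (1 - d) / c by rewrite -bc mulfK.
have yE : y = b * (1 - x) by apply/esym/subr0_eq/(eq0_of_eq_sub e_b); ring.
have zE : z = c * (1 - x).
  apply/esym/subr0_eq/(mulfI b_nz); rewrite mulr0.
  by apply: (eq0_of_eq_sub commute_c); rewrite yE; ring.
have wE : w = 1 - (1 - d) * (1 - x).
  by apply/esym/subr0_eq/(eq0_of_eq_sub e_w); rewrite zE -bc; ring.
split; last by rewrite wE yE zE bE.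
  by apply: contraNneq bc_nz => d1; rewrite bc d1 subrr.
by rewrite a0 bE.
Qed.

Lemma local_solution_family3 : a = 0 -> d = 0 -> b != 0 ->
  mx22 a b c d = rho3 b c /\ mx22 x y z w = tau3 b c x y.
Proof.
move=> a0 d0 b_nz.
have zE : z = c * y / b.
  apply: (mulfI b_nz); rewrite [RHS]mulrC divfK //.
  by apply/esym/subr0_eq/(eq0_of_eq_sub commute_c); ring.
have wE : w = x.
  apply/esym/subr0_eq/(mulfI b_nz); rewrite mulr0.
  by apply: (eq0_of_eq_sub commute_b); rewrite a0 d0; ring.
by rewrite a0 d0 zE wE.
Qed.

End LocalSolutions.

Lemma local_extension_classification (F : fieldType) (M N : 'M[F]_2) :
  M \in unitmx -> M != 1%:M ->
  blockD 3 1 M *m blockD 3 2 M *m blockD 3 1 M =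
    blockD 3 2 M *m blockD 3 1 M *m blockD 3 2 M ->
  blockD 3 1 N *m blockD 3 1 M = blockD 3 1 M *m blockD 3 1 N ->
  blockD 3 1 M *m blockD 3 2 M *m blockD 3 1 N =
    blockD 3 2 N *m blockD 3 1 M *m blockD 3 2 M ->
     (exists a c t : F, [/\ c != 0, a != 1, a != 0, M = rho1 a c & N = tau1 a c t])
  \/ (exists c d x : F, [/\ c != 0, d != 1, d != 0, M = rho2 c d & N = tau2 c d x])
  \/ (exists b c x y : F, [/\ b != 0, c != 0, M = rho3 b c & N = tau3 b c x y]).
Proof.
have [a [b [c [d ->]]]] := mx22_eta M; have [x [y [z [w ->]]]] := mx22_eta N.
rewrite unitmxE unitfE det_mx22 => det_nz M_nt.
move=> /braid3_mx22[ba babd bacd bd] /commute3_mx22[cc cb] /mixed3_mx22[mx my mb mw].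
have bc_nz_if : a * d = 0 -> b * c != 0.
  by move=> ad0; move: det_nz; rewrite ad0 sub0r oppr_eq0.
have [a0|a_nz] := eqVneq a 0; have [d0|d_nz] := eqVneq d 0.
- have [b_nz c_nz] : b != 0 /\ c != 0.
    by apply/norP; rewrite -mulf_eq0 bc_nz_if // a0 mul0r.
  have [-> ->] := local_solution_family3 cc cb a0 d0 b_nz.
  by right; right; exists b, c, x, y.
- have bc_nz : b * c != 0 by rewrite bc_nz_if // a0 mul0r.
  have [d_n1 -> ->] := local_solution_family2 bd cc mb mw a0 d_nz bc_nz.
  right; left; exists c, d, x; split=> //.
  by apply: contraNneq bc_nz => ->; rewrite mulr0.
- have bc_nz : b * c != 0 by rewrite bc_nz_if // d0 mulr0.
  have [a_n1 -> ->] := local_solution_family1 ba cc mx my a_nz d0 bc_nz.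
  left; exists a, c, w; split=> //.
  by apply: contraNneq bc_nz => ->; rewrite mulr0.
- by rewrite local_solution_trivial ?eqxx in M_nt.
Qed.

Theorem theorem3p3 (R : realType) (n : nat) (M N : 'M[R[i]]_2) :
  (3 <= n)%N ->
  (* rho : B_n -> GL_n(C), sigma_i |-> diag(I_{i-1}, M, I_{n-i-1}), non-trivial *)
  braid_rep (fun i => blockD n i M) ->
  nontrivial (fun i => blockD n i M) ->
  (* rho' : SM_n -> M_n(C), extension with tau_i |-> diag(I_{i-1}, N, I_{n-i-1}) *)
  SM_rep (fun i => blockD n i M) (fun i => blockD n i N) ->
  nontrivial (fun i => blockD n i M) ->
  (   (exists a c t : R[i], c != 0 /\ a != 1 /\ a != 0 /\
         equiv_SM (fun i => blockD n i M) (fun i => blockD n i N)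
                  (fun i => blockD n i (rho1 a c)) (fun i => blockD n i (tau1 a c t)))
   \/ (exists c d x : R[i], c != 0 /\ d != 1 /\ d != 0 /\
         equiv_SM (fun i => blockD n i M) (fun i => blockD n i N)
                  (fun i => blockD n i (rho2 c d)) (fun i => blockD n i (tau2 c d x)))
   \/ (exists b c x y : R[i], b != 0 /\ c != 0 /\
         equiv_SM (fun i => blockD n i M) (fun i => blockD n i N)
                  (fun i => blockD n i (rho3 b c)) (fun i => blockD n i (tau3 b c x y)))) /\
  ((forall i, (1 <= i <= n - 1)%N -> blockD n i N \in unitmx) ->
     SB_rep (fun i => blockD n i M) (fun i => blockD n i N)).
Proof.
move=> n_ge3; have {n_ge3} [m ->] : exists m, n = (3 + m)%N by exists (n - 3)%N; lia.
move=> [M_unit braid] M_nt [_ singular] _.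
split; last first.
  move=> N_unit; split; first by move=> i i_range; split; [exact: M_unit | exact: N_unit].
  by split.
have [_ [commute_tau mixed]] := singular.
have M_unit3 : M \in unitmx by rewrite unitmxE -(det_blockD_1 m.+1) -unitmxE; exact: M_unit.
have M_n1 : M != 1%:M by apply/eqP => M1; case: M_nt => i [_]; rewrite M1 blockD_1 eqxx.
move: (braid.1 1%N isT isT) (commute_tau 1%N isT) (mixed 1%N isT isT).1.
rewrite !blockD_ulblock // !mul_block_diag1 => /eq_block_mx[braid3 _ _ _].
move=> /eq_block_mx[commute3 _ _ _] /eq_block_mx[mixed3 _ _ _].
have := local_extension_classification M_unit3 M_n1 braid3 commute3 mixed3.
case=> [[a [c [t [c_nz a_n1 a_nz -> ->]]]] | [[c [d [x [c_nz d_n1 d_nz -> ->]]]]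
  | [b [c [x [y [b_nz c_nz -> ->]]]]]]].
- by left; exists a, c, t; do 3!split=> //; exact: equiv_SM_refl.
- by right; left; exists c, d, x; do 3!split=> //; exact: equiv_SM_refl.
- by right; right; exists b, c, x, y; do 2!split=> //; exact: equiv_SM_refl.
Qed.
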